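(* If the ST problem for $(D_{SC},F,B)$ has a positive answer, then there exists a set cover of size $k$ for $(\mathcal U,\mathcal S)$, i.e. a $k$-element subfamily of $\mathcal S$ whose union is $\mathcal U$.
   Context: Snow Team problem (ST): given a digraph $D=(\mathcal V,\mathcal A)$ whose underlying graph is connected, and $F:\mathcal V\to\{0,1\}$, $B:\mathcal V\to\mathbb N$, with $\mathbf k_B=\sum_vB(v)$: do there exist $\mathbf k_B$ directed walks, exactly $B(v)$ of which start at each $v$, such that, letting $H$ be the subgraph consisting of the vertices and arcs of these walks, all vertices of $F^{-1}(1)$ lie in one connected component of the underlying undirected graph of $H$? Construction: $\mathcal U=\{1,\dots,n\}$, $\mathcal S=\{S_1,\dots,S_m\}$ with $S_t\subseteq\mathcal U$, $\bigcup_tS_t=\mathcal U$, and $1\le k\le m$. Write $S_t=\{x_1<\dots<x_{\ell(t)}\}$ and $I_i=\{j: i\in S_j\}$. The digraph $D_{SC}$ has vertices $u_i$ ($i\in\mathcal U$); $u_{i,j},u'_{i,j},v_{i,j},v'_{i,j}$ ($i\in\mathcal U$, $j\in I_i$); and $z,z_1,\dots,z_k$. Its arcs are those of the vertical paths $P_{i,j}=(u_{i,j},u_i,u'_{i,j},v_{i,j},v'_{i,j})$ ($i\in\mathcal U,j\in I_i$), of the horizontal paths $P^h_t=(z,v_{x_1,t},v_{x_2,t},\dots,v_{x_{\ell(t)},t})$ ($t\in\{1,\dots,m\}$, with $x_1<\dots<x_{\ell(t)}$ the elements of $S_t$), and the arcs $(z_l,z)$ for $l=1,\dots,k$. Set $F(v)=1$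 for all vertices $v$, and $B(v)=1$ if $v$ is a source of $D_{SC}$ (i.e. $v\in\{u_{i,j}\}\cup\{z_1,\dots,z_k\}$) and $B(v)=0$ otherwise. *)

From Stdlib Require Import Relations PeanoNat.
From HB Require Import structures.
From mathcomp Require Import all_boot.
Set Implicit Arguments. Unset Strict Implicit. Unset Printing Implicit Defensive.

Section ST.
Variable T : eqType.

Definition is_walk (V : pred T) (A : T -> T -> Prop) (w : seq T) : Prop :=
  w <> [::] /\ (forall x, x \in w -> V x) /\
  (forall p a b q, w = p ++ a :: b :: q -> A a b).

Definition H_vertex (W : seq (seq T)) (x : T) : Prop :=
  exists2 w, w \in W & x \in w.
Definition H_arc (W : seq (seq T)) (a b : T) : Prop :=
  exists2 w, w \in W & exists p q, w = p ++ a :: b :: q.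
Definition H_connected (W : seq (seq T)) (x y : T) : Prop :=
  H_vertex W x /\
  clos_refl_trans T (fun a b => H_arc W a b \/ H_arc W b a) x y.

Definition ST_positive (V : pred T) (A : T -> T -> Prop)
    (F : T -> bool) (B : T -> nat) : Prop :=
  exists W : seq (seq T),
    (forall w, w \in W -> is_walk V A w) /\
    (forall v, V v -> count (fun w => ohead w == Some v) W = B v) /\
    (forall x y, V x -> V y -> F x -> F y -> H_connected W x y).
End ST.

Inductive vtx : Type :=
| vU    of nat
| vUij  of nat & nat
| vUpij of nat & nat
| vVij  of nat & nat
| vVpij of nat & nat
| vZ
| vZl   of nat.

Lemma vtx_comparable : comparable vtx.
Proof. move=> x y; rewrite /decidable; decide equality; exact: Nat.eq_dec. Qed.
HB.instance Definition _ := comparableMixin vtx_comparable.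

Section DSC.
(* set cover instance: U = {1..n}, S_1..S_m given by membership predicates *)
Variables (n m k : nat) (S : nat -> pred nat).

Definition inU (i : nat) : bool := (1 <= i <= n).
Definition inI (i j : nat) : bool := [&& 1 <= i <= n, 1 <= j <= m & S j i].

Definition DSC_vertex (v : vtx) : bool :=
  match v with
  | vU i => inU i
  | vUij i j | vUpij i j | vVij i j | vVpij i j => inI i j
  | vZ => true
  | vZl l => 1 <= l <= k
  end.

Inductive DSC_arc : vtx -> vtx -> Prop :=
(* vertical paths P_{i,j} = (u_{i,j}, u_i, u'_{i,j}, v_{i,j}, v'_{i,j}) *)
| arc_v1 i j : inI i j -> DSC_arc (vUij i j) (vU i)
| arc_v2 i j : inI i j -> DSC_arc (vU i) (vUpij i j)
| arc_v3 i j : inI i j -> DSC_arc (vUpij i j) (vVij i j)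
| arc_v4 i j : inI i j -> DSC_arc (vVij i j) (vVpij i j)
(* horizontal paths P^h_t = (z, v_{x1,t}, ..., v_{x_l(t),t}) *)
| arc_h0 t i : 1 <= t <= m -> S t i -> (forall x, x < i -> ~~ S t x) ->
    DSC_arc vZ (vVij i t)
| arc_h t i i' : 1 <= t <= m -> S t i -> S t i' -> i < i' ->
    (forall x, i < x < i' -> ~~ S t x) -> DSC_arc (vVij i t) (vVij i' t)
| arc_z l : 1 <= l <= k -> DSC_arc (vZl l) vZ.

Definition F_SC (v : vtx) : bool := true.
Definition B_SC (v : vtx) : nat :=
  match v with vUij _ _ | vZl _ => 1 | _ => 0 end.

Definition set_cover_instance : Prop :=
  (forall t, 1 <= t <= m -> forall x, S t x -> 1 <= x <= n) /\
  (forall i, 1 <= i <= n -> exists2 t, 1 <= t <= m & S t i) /\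
  1 <= k <= m.

Definition has_set_cover_of_size : Prop :=
  exists C : seq nat,
    [/\ uniq C, size C = k, (forall t, t \in C -> 1 <= t <= m) &
        forall i, 1 <= i <= n -> exists2 t, t \in C & S t i].
End DSC.

From HB Require Import structures.
From mathcomp Require Import all_boot zify.

(* The cover consists of the sets S_t whose horizontal path is entered by a
   walk starting (z_l, z, v_{x,t}); there are at most k of them because every
   z_l starts exactly one walk.  If t is not of this kind, no walk uses an arc
   of P^h_t: by induction along the path, the walk reaching v_{x,t} and the
   walk reaching v'_{x,t} both come down P_{x,t} and have u'_{x,t} as third
   vertex, whereas the |I_x| walks starting at the u_{x,j} must supply all
   |I_x| vertices u'_{x,j} in that position.  So if element i were uncovered,
   the vertices of the paths P_{i,j} would form a union of components of H
   not containing z. *)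

Set Implicit Arguments.
Unset Strict Implicit.
Unset Printing Implicit Defensive.

Section SeqCounting.
Variable T : eqType.
Implicit Types r s : seq T.

Lemma count_mem_once r s : uniq r -> (forall y, y \in r -> count_mem y s = 1) ->
  count (mem r) s = size r.
Proof.
elim: r => [|y r IHr] /=; first by elim: s => //= x s ->.
move=> /andP[yr ur] once.
have disj : count (predI (pred1 y) (mem r)) s = 0.
  rewrite -(count_pred0 s); apply: eq_count => z /=.
  by case: eqP => // ->; rewrite (negbTE yr).
have predU_cons : count (mem (y :: r)) s = count (predU (pred1 y) (mem r)) s.
  by apply: eq_count => z; rewrite inE.
rewrite -[LHS]addn0 -disj predU_cons count_predUI once ?mem_head // IHr // => z zr.
by apply: once; rewrite inE zr orbT.
Qed.

Lemma two_le_count (P : pred T) s a b :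
  a \in s -> b \in s -> a != b -> P a -> P b -> 1 < count P s.
Proof.
move=> as_ bs ab Pa Pb; rewrite -size_filter (leq_trans _ (size_undup _)) //.
apply: (uniq_leq_size (s1 := [:: a; b])); first by rewrite /= inE ab.
by move=> x; rewrite !inE mem_undup mem_filter => /orP[]/eqP->; apply/andP.
Qed.

Lemma uniq_ltn_size_dup r s t :
  uniq r -> {subset r <= s} -> 1 < count_mem t s -> size r < size s.
Proof.
move=> ur rs ts; apply: (leq_ltn_trans (uniq_leq_size ur (s2 := undup s) _)).
  by move=> x /rs; rewrite mem_undup.
rewrite ltn_neqAle size_undup andbT; apply: contraTneq ts => eq_size.
have us : uniq s by rewrite (uniq_size_uniq (undup_uniq s) (mem_undup s)) eq_size.
by rewrite count_uniq_mem // -leqNgt leq_b1.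
Qed.

Lemma extend_uniq r C k : uniq r -> uniq C -> {subset C <= r} -> size C <= k <= size r ->
  exists C', [/\ uniq C', size C' = k, {subset C' <= r} & {subset C <= C'}].
Proof.
move=> ur uC Cr /andP[Ck kr]; set D := C ++ [seq x <- r | x \notin C].
have uD : uniq D.
  rewrite cat_uniq uC filter_uniq // andbT.
  by apply/hasPn => x; rewrite mem_filter => /andP[].
have rD : {subset r <= D} by move=> x xr; rewrite mem_cat mem_filter xr; case: (x \in C).
exists (take k D); split.
- exact: take_uniq.
- exact: size_takel (leq_trans kr (uniq_leq_size ur rD)).
- by move=> x /mem_take; rewrite mem_cat mem_filter => /orP[/Cr|/andP[]].
- by move=> x xC; rewrite take_cat ltnNge Ck mem_cat xC.
Qed.

End SeqCounting.

Section Walks.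
Variables (T : eqType) (V : pred T) (A : T -> T -> Prop) (W : seq (seq T)).
Hypothesis walksW : forall w, w \in W -> is_walk V A w.

Lemma walk_arc w p a b q : w \in W -> w = p ++ a :: b :: q -> A a b.
Proof. by move=> /walksW[_ [_ arcs]]; apply: arcs. Qed.

Lemma walk_vertex w x : w \in W -> x \in w -> V x.
Proof. by move=> /walksW[_ [inV _]]; apply: inV. Qed.

Lemma walk_pred w p x q : w \in W -> w = p ++ x :: q ->
  count (fun w => ohead w == Some x) W = 0 ->
  exists p' y, [/\ p = rcons p' y, w = p' ++ y :: x :: q & A y x].
Proof.
move=> wW; case/lastP: p => [|p' y] e c0.
  suff : 0 < count (fun w => ohead w == Some x) W by rewrite c0.
  by rewrite -has_count; apply/hasP; exists w; rewrite // e.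
have e' : w = p' ++ y :: x :: q by rewrite e cat_rcons.
by exists p', y; split=> //; apply: walk_arc wW e'.
Qed.

Lemma walk_source w p x q : w \in W -> w = p ++ x :: q -> (forall y, ~ A y x) -> p = [::].
Proof.
move=> wW; case/lastP: p => [//|p' y] e noin; case: (noin y).
by apply: (walk_arc (p := p') (q := q) wW); rewrite e cat_rcons.
Qed.

Lemma H_connected_invariant (R : eqType) (f : T -> R) x y :
  (forall a b, H_arc W a b -> f a = f b) -> H_connected W x y -> f x = f y.
Proof.
move=> fH [_]; elim=> [a b [/fH|/fH/esym] | | a b c _ -> _] //.
Qed.

End Walks.

Section DSCSolution.
Variables (n m k : nat) (S : nat -> pred nat) (W : seq (seq vtx)).
Local Notation V := (DSC_vertex n m k S).
Local Notation A := (DSC_arc n m k S).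
Local Notation inI := (inI n m S).
Hypothesis instS : set_cover_instance n m k S.
Hypothesis walksW : forall w, w \in W -> is_walk V A w.
Hypothesis headsW : forall v, V v -> count (fun w => ohead w == Some v) W = B_SC v.
Hypothesis connW : forall x y, V x -> V y -> F_SC x -> F_SC y -> H_connected W x y.

Lemma arc_into_z y : A y vZ -> exists l, y = vZl l.
Proof. by move=> a; inversion a; exists l. Qed.

Lemma no_arc_into_zl y l : ~ A y (vZl l).
Proof. by move=> a; inversion a. Qed.

Lemma no_arc_into_uij y x a : ~ A y (vUij x a).
Proof. by move=> e; inversion e. Qed.

Lemma arc_into_u y x : A y (vU x) -> exists2 a, y = vUij x a & inI x a.
Proof. by move=> e; inversion e; exists j. Qed.

Lemma arc_into_uprime y x j : A y (vUpij x j) -> y = vU x.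
Proof. by move=> e; inversion e. Qed.

Lemma arc_into_v y x t :
  A y (vVij x t) -> [\/ y = vUpij x t, y = vZ | exists x0, y = vVij x0 t].
Proof. by move=> e; inversion e; [constructor 1|constructor 2|constructor 3; exists i]. Qed.

Lemma arc_into_vprime y x t : A y (vVpij x t) -> y = vVij x t.
Proof. by move=> e; inversion e. Qed.

Lemma arc_vv x t x' t' :
  A (vVij x t) (vVij x' t') -> [/\ t' = t, 1 <= t <= m, S t x & x < x'].
Proof. by move=> e; inversion e; subst. Qed.

Lemma walk_through v : V v -> exists2 w, w \in W & exists p q, w = p ++ v :: q.
Proof.
move=> Vv; have [[w wW vw] _] := connW Vv Vv isT isT.
by exists w => //; case/splitPr: vw => p q; exists p, q.
Qed.

Lemma walk_at_z w p q : w \in W -> w = p ++ vZ :: q -> exists l, p = [:: vZl l].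
Proof.
move=> wW e.
have [p' [y [-> e' /arc_into_z [l ey]]]] := walk_pred walksW wW e (@headsW vZ isT).
by subst y; exists l; rewrite (walk_source walksW wW e' (fun y => @no_arc_into_zl y l)).
Qed.

Lemma walk_at_uprime w p x j q : w \in W -> w = p ++ vUpij x j :: q -> inI x j ->
  exists2 a, p = [:: vUij x a; vU x] & inI x a.
Proof.
move=> wW e xj.
have [p1 [y [-> e1 /arc_into_uprime ey]]] := walk_pred walksW wW e (@headsW (vUpij x j) xj).
have ux : V (vU x) by case/and3P: xj.
subst y.
have [p2 [y [-> e2 /arc_into_u [a ey xa]]]] := walk_pred walksW wW e1 (@headsW (vU x) ux).
subst y; exists a => //.
by rewrite (walk_source walksW wW e2 (fun y => @no_arc_into_uij y x a)).
Qed.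

Definition third (w : seq vtx) : option vtx := ohead (drop 2 w).

Lemma third_uprime_head w x j : w \in W -> third w = Some (vUpij x j) -> inI x j ->
  exists2 a, ohead w = Some (vUij x a) & inI x a.
Proof.
case: w => [|u [|v [|c r]]] //= wW [] ec xj; subst c.
by have [a [-> _] xa] := walk_at_uprime (p := [:: u; v]) (q := r) wW erefl xj; exists a.
Qed.

Lemma third_uprime_unique x t w1 w2 : inI x t -> w1 \in W -> w2 \in W ->
  third w1 = Some (vUpij x t) -> third w2 = Some (vUpij x t) -> w1 = w2.
Proof.
move=> xt w1W w2W t1 t2; apply/eqP; apply: contraT => w12.
set J := [seq j <- iota 1 m | inI x j].
have memJ j : (j \in J) = inI x j.
  by rewrite mem_filter andb_idr // mem_iota => /and3P[_ /andP[? ?] _]; lia.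
set heads := [seq Some (vUij x j) | j <- J].
set cols := [seq w <- W | ohead w \in heads].
have inj_u : injective (fun j => Some (vUij x j)) by move=> i j [].
have inj_up : injective (fun j => Some (vUpij x j)) by move=> i j [].
have uJ : uniq J by rewrite filter_uniq ?iota_uniq.
have size_cols : size cols = size J.
  rewrite size_filter -count_map -(size_map (fun j => Some (vUij x j)) J) count_mem_once //.
    by rewrite map_inj_uniq.
  by move=> _ /mapP[j /[!memJ] xj ->]; rewrite count_map (@headsW (vUij x j) xj).
have in_cols w j : w \in W -> third w = Some (vUpij x j) -> inI x j -> w \in cols.
  move=> wW tw xj; rewrite mem_filter wW andbT.
  by have [a -> xa] := third_uprime_head wW tw xj; apply: map_f; rewrite memJ.
have : size [seq Some (vUpij x j) | j <- J] < size (map third cols).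
  apply: uniq_ltn_size_dup (Some (vUpij x t)) _ _ _; first by rewrite map_inj_uniq.
    move=> _ /mapP[j /[!memJ] xj ->].
    have [w wW [p [q e]]] := @walk_through (vUpij x j) xj.
    have [a ep _] := walk_at_uprime wW e xj.
    have tw : third w = Some (vUpij x j) by rewrite e ep.
    by rewrite -tw map_f // (in_cols w j).
  rewrite count_map (two_le_count (a := w1) (b := w2)) ?(in_cols _ t) //= ?t1 ?t2 //.
by rewrite !size_map size_cols ltnn.
Qed.

Definition zcol (w : seq vtx) : option nat :=
  if w is [:: vZl _, vZ, vVij _ t & _] then Some t else None.

Definition zcols : seq nat := undup (pmap zcol W).

Lemma zcol_zcols w t : w \in W -> zcol w = Some t -> t \in zcols.
Proof. by move=> wW e; rewrite mem_undup mem_pmap -e map_f. Qed.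

Lemma zcols_range t : t \in zcols -> 1 <= t <= m.
Proof.
rewrite mem_undup mem_pmap => /mapP[[|[] // l [|[] // [|[] // i t' r]]] //= wW [->]].
have : V (vVij i t') by apply: (walk_vertex walksW wW); rewrite !inE eqxx !orbT.
by case/and3P.
Qed.

Lemma size_zcols : size zcols <= k.
Proof.
rewrite (leq_trans (size_undup _)) // size_pmap.
set Z := [seq Some (vZl l) | l <- iota 1 k].
have <- : count (mem Z) (map ohead W) = k.
  rewrite count_mem_once ?size_map ?size_iota //.
    by rewrite map_inj_uniq ?iota_uniq // => l l' [].
  move=> _ /mapP[l /[!mem_iota] lk ->]; rewrite count_map (@headsW (vZl l)) //=; lia.
rewrite count_map -(eq_in_count (a1 := predI [eta zcol] (mem W))) => [|w wW]; last first.
  by rewrite /= wW andbT.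
apply: sub_count => -[|[] // l [|[] // [|[] // i t r]]] //= wW.
have : V (vZl l) by apply: (walk_vertex walksW wW); rewrite mem_head.
by rewrite /= => lk; apply: map_f; rewrite mem_iota; lia.
Qed.

Lemma walk_at_v t x w p q : t \notin zcols ->
  (forall x0, ~ H_arc W (vVij x0 t) (vVij x t)) ->
  w \in W -> w = p ++ vVij x t :: q -> inI x t ->
  exists a, p = [:: vUij x a; vU x; vUpij x t].
Proof.
move=> tz noh wW e xt.
have [p1 [y [-> e1 /arc_into_v]]] := walk_pred walksW wW e (@headsW (vVij x t) xt).
case=> [ey | ey | [x0 ey]]; subst y.
- by have [a -> _] := walk_at_uprime wW e1 xt; exists a.
- have [l el] := walk_at_z wW e1.
  by move: tz; rewrite (@zcol_zcols w t) // e1 el.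
- by case: (noh x0); exists w => //; exists p1, q.
Qed.

Lemma no_horizontal_arc t x x' : t \notin zcols -> ~ H_arc W (vVij x t) (vVij x' t).
Proof.
move=> tz; elim/ltn_ind: x x' => x IH x' [w wW [p [q e]]].
have [_ tm Stx _] := arc_vv (walk_arc walksW wW e).
have xt : inI x t by apply/and3P; split=> //; exact: (proj1 instS t tm x Stx).
have noh x0 : ~ H_arc W (vVij x0 t) (vVij x t).
  move=> [w0 w0W [p0 [q0 e0]]]; have [_ _ _ x0x] := arc_vv (walk_arc walksW w0W e0).
  by apply: (IH x0 x0x x); exists w0 => //; exists p0, q0.
have [w2 w2W [p2 [q2 e2]]] := @walk_through (vVpij x t) xt.
have [p2' [y [_ e2' /arc_into_vprime ey]]] :=
  walk_pred walksW w2W e2 (@headsW (vVpij x t) xt).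
subst y; have [a ep] := walk_at_v tz noh wW e xt.
have [b ep2] := walk_at_v tz noh w2W e2' xt.
have := third_uprime_unique xt wW w2W; rewrite e e2' ep ep2 => /(_ erefl erefl).
by case.
Qed.

Definition column (i : nat) (v : vtx) : bool :=
  match v with
  | vU a | vUij a _ | vUpij a _ | vVij a _ | vVpij a _ => a == i
  | vZ | vZl _ => false
  end.

Lemma column_arc i a b : (forall t, t \in zcols -> ~~ S t i) ->
  H_arc W a b -> column i a = column i b.
Proof.
move=> nocov [w wW [p [q e]]]; have ab := walk_arc walksW wW e.
case: a b / ab e => [||||t i0 _ Sti0 _ e | t i0 i' _ Sti0 Sti' _ _ e |] //=.
- apply/esym/eqP => ei; subst i0; have [l el] := walk_at_z wW e.
  have tz : t \in zcols by apply: (@zcol_zcols w); rewrite // e el.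
  by move: (nocov t tz); rewrite Sti0.
- case: (boolP (t \in zcols)) => [/nocov Sti | tz].
    have off x : S t x -> (x == i) = false by move=> Stx; apply: contraNF Sti => /eqP <-.
    by rewrite !off.
  by case: (no_horizontal_arc (x := i0) (x' := i') tz); exists w => //; exists p, q.
Qed.

Lemma zcols_cover i : 1 <= i <= n -> exists2 t, t \in zcols & S t i.
Proof.
move=> iU; suff /hasP[t tz Sti] : has (S^~ i) zcols by exists t.
apply: contraT => /hasPn nocov.
have := H_connected_invariant (fun a b => @column_arc i a b nocov)
  (@connW (vU i) vZ iU isT isT isT).
by rewrite /= eqxx.
Qed.

End DSCSolution.

Theorem lemma8 (n m k : nat) (S : nat -> pred nat) :
  set_cover_instance n m k S ->
  ST_positive (DSC_vertex n m k S) (DSC_arc n m k S) F_SC B_SC ->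
  has_set_cover_of_size n m k S.
Proof.
move=> instS [W [walksW [headsW connW]]].
have zm : {subset zcols W <= iota 1 m}.
  by move=> t /(zcols_range walksW); rewrite mem_iota; lia.
have km : size (zcols W) <= k <= size (iota 1 m).
  by rewrite size_iota (size_zcols walksW headsW); case: instS => _ [_ /andP[]].
have [C [uC sizeC Cm zC]] := extend_uniq (iota_uniq 1 m) (undup_uniq _) zm km.
exists C; split=> // [t /Cm | i /(zcols_cover instS walksW headsW connW) [t /zC]].
  by rewrite mem_iota; lia.
by exists t.
Qed.
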